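(* Let $c<1$ be any constant, $\ell\le n^c$, and suppose $d$ is unknown to the algorithm. Any non-adaptive randomized group testing algorithm that, with probability at least $3/4$, detects $\ell$ defective items must make at least $\Omega\left(\frac{\ell\log^2 n}{\log\ell+\log\log n}\right)$ tests.
   Context: Group testing: items $X=[n]$, unknown defective set $I\subseteq X$ with $d=|I|$. A test $Q\subseteq X$ has answer $1$ if $Q\cap I\neq\emptyset$ and $0$ otherwise. A non-adaptive (randomized) algorithm chooses all its tests before seeing any answer, then computes its output from the answers. ''Detects $\ell$ defective items'' means it outputs $L\subseteq I$ with $|L|=\ell$. ''$d$ is unknown'' means the algorithm receives no information about $|I|$ and must succeed (with the stated probability) for every defective set $I$ with $|I|\ge\ell$. Logarithms are base 2. *)

From HB Require Import structures.
From mathcomp Require Import all_boot all_order all_algebra.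
From mathcomp Require Import all_classical all_reals all_analysis.
From mathcomp Require Import Rstruct Rstruct_topology.
From Stdlib Require Import Rdefinitions.
Notation R := Rdefinitions.R.
Set Implicit Arguments. Unset Strict Implicit. Unset Printing Implicit Defensive.
Import Order.TTheory GRing.Theory Num.Theory.
Local Open Scope ring_scope.

Definition log2 (x : R) : R := ln x / ln 2.

Definition test_answer (n : nat) (I Q : {set 'I_n}) : bool := Q :&: I != finset.set0.

Definition answers (n m : nat) (tests : 'I_m -> {set 'I_n}) (I : {set 'I_n})
  : {ffun 'I_m -> bool} := [ffun j => test_answer I (tests j)].

Definition is_distr (Omega : finType) (p : Omega -> R) : Prop :=
  (forall w, 0 <= p w) /\ \sum_(w : Omega) p w = 1.

(* A non-adaptive randomized algorithm making m tests on items [n]: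
   random seed w ~ p; tests w : the m tests (chosen before any answer);
   dec w : the output computed from the answer vector.
   It detects l defectives with probability >= 3/4 with d unknown:
   for every defective set I with |I| >= l, with prob >= 3/4 the output L
   satisfies L \subset I and |L| = l. *)
Definition detects_whp (n m l : nat) (Omega : finType) (p : Omega -> R)
  (tests : Omega -> 'I_m -> {set 'I_n})
  (dec : Omega -> {ffun 'I_m -> bool} -> {set 'I_n}) : Prop :=
  is_distr p /\
  forall I : {set 'I_n}, leq l #|I| ->
    3 / 4 <= \sum_(w : Omega |
                   (dec w (answers (tests w) I) \subset I) &&
                   eqn #|dec w (answers (tests w) I)| l) p w.

From HB Require Import structures.
From mathcomp Require Import all_boot all_order all_algebra.
From mathcomp Require Import all_classical all_reals all_analysis.
From mathcomp Require Import Rstruct Rstruct_topology.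
From mathcomp Require Import zify lra.
Import Order.TTheory GRing.Theory Num.Theory.
Set Implicit Arguments. Unset Strict Implicit. Unset Printing Implicit Defensive.

(* By Yao's principle it suffices to beat deterministic algorithms on a
   uniformly random defective set of size d.  Against such a set a test Q is
   almost surely negative when |Q| d is much smaller than n and almost surely
   positive when it is much larger; only the remaining "useful" tests carry
   information.  If u tests are useful at scale d, the answers are essentially
   one of 2^u vectors, and an output of l items lies inside the defective set
   with probability about (d/n)^l, so the success probability is at most
   m/T + 2^u (d/n)^l.  A test is useful for at most one of the scales
   d_i = l T^(2i); there are about log n / (log l + log log n) such scales below
   n^(1-a), and averaging over the random seed gives a seed that succeeds on half
   of them, each of which needs about l log n useful tests. *)

Lemma binomial_shrink_le n e k :
  k <= n -> 'C(n - k, e) * n ^ k <= 'C(n, e) * (n - e) ^ k.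
Proof.
elim: k => [|k IHk] lekn; first by rewrite !subn0 !expn0 !muln1.
have step : 'C(n - k.+1, e) * n <= 'C(n - k, e) * (n - e).
  have := mul_bin_down (n - k) e.
  have -> : (n - k).-1 = n - k.+1 by lia.
  move: ('C(n - k.+1, e)) ('C(n - k, e)) => X Y def_X.
  rewrite -(leq_pmul2l (_ : 0 < n - k)); last by lia.
  rewrite mulnA def_X.
  have : (n - k - e) * n <= (n - k) * (n - e) by nia.
  nia.
rewrite !expnS; have := IHk (ltnW lekn); nia.
Qed.

Lemma expn_sub_bernoulli n d q : d <= n -> (n - d) ^ q * (n + q * d) <= n ^ q.+1.
Proof.
move=> ledn; elim: q => [|q IHq]; first by rewrite mul0n addn0 mul1n expn1.
have step : (n - d) * (n + q.+1 * d) <= n * (n + q * d).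
  by rewrite -(subnK ledn); move: (n - d) => r; nia.
rewrite (expnS (n - d)) (expnS n) mulnAC.
apply: leq_trans (leq_mul step (leqnn _)) _.
by rewrite -mulnA leq_mul2l mulnC IHq orbT.
Qed.

Lemma card_bigcup_le (I T : finType) (P : pred I) (B : I -> {set T}) :
  #|\bigcup_(i | P i) B i| <= \sum_(i | P i) #|B i|.
Proof.
elim/big_ind2: _ => [|k1 S1 k2 S2 le1 le2|//]; first by rewrite cards0.
exact: leq_trans (leq_card_setU S1 S2).1 (leq_add le1 le2).
Qed.

Lemma leq_expn2r m1 m2 e : m1 <= m2 -> m1 ^ e <= m2 ^ e.
Proof. by move=> le12; elim: e => // e IHe; rewrite !expnS leq_mul. Qed.

Lemma card_ffun_agree_outside (J : finType) (U : {set J}) (f0 : J -> bool) :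
  #|[set v : {ffun J -> bool} | [forall j, (j \notin U) ==> (v j == f0 j)]]| <= 2 ^ #|U|.
Proof.
rewrite -card_powerset -(card_in_imset (f := fun v : {ffun J -> bool} => [set j in U | v j])).
  apply: subset_leq_card; apply/fintype.subsetP => _ /imsetP[v _ ->].
  by rewrite inE; apply/fintype.subsetP => j; rewrite inE => /andP[].
move=> v1 v2; rewrite !inE => /forallP agree1 /forallP agree2 /setP eqU.
apply/ffunP => j; case: (boolP (j \in U)) => jU.
  by have := eqU j; rewrite !inE jU.
by move: (agree1 j) (agree2 j); rewrite jU => /eqP -> /eqP ->.
Qed.

Section RandomSets.
Variable n : nat.
Implicit Types (L Q : {set 'I_n}) (d T : nat).

Lemma cards_ord_le L : #|L| <= n.
Proof. by rewrite -[n in _ <= n]card_ord max_card. Qed.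

Lemma card_ksets_superset L d : d <= n ->
  #|[set I : {set 'I_n} | (#|I| == d) && (L \subset I)]| = 'C(n - #|L|, n - d).
Proof.
move=> ledn.
have -> : [set I : {set 'I_n} | (#|I| == d) && (L \subset I)] =
    (@finset.setC _) @^-1: [set J : {set 'I_n} | (J \subset ~: L) & #|J| == n - d].
  apply/setP => I; rewrite !inE finset.setCS andbC; congr (_ && _).
  by have := cardsC I; have := cards_ord_le I; rewrite card_ord => *; apply/eqP/eqP; lia.
rewrite card_preimset; last exact: finset.setC_inj.
by rewrite cards_draws; have := cardsC L; rewrite card_ord => ?; congr 'C(_, _); lia.
Qed.

Lemma card_ksets_disjoint Q d :
  #|[set I : {set 'I_n} | (#|I| == d) && (Q :&: I == finset.set0)]| = 'C(n - #|Q|, d).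
Proof.
have -> : [set I : {set 'I_n} | (#|I| == d) && (Q :&: I == finset.set0)] =
    [set I : {set 'I_n} | (I \subset ~: Q) & #|I| == d].
  apply/setP => I.
  by rewrite !inE finset.setIC finset.setI_eq0 finset.disjoints_subset andbC.
by rewrite cards_draws; have := cardsC Q; rewrite card_ord => ?; congr 'C(_, _); lia.
Qed.

Lemma ksets_superset_le L d : d <= n ->
  #|[set I : {set 'I_n} | (#|I| == d) && (L \subset I)]| * n ^ #|L| <= 'C(n, d) * d ^ #|L|.
Proof.
move=> ledn; rewrite card_ksets_superset //.
by have := binomial_shrink_le (n - d) (cards_ord_le L); rewrite bin_sub // subKn.
Qed.

Lemma ksets_disjoint_le Q d T : 0 < n -> d <= n -> n * T <= #|Q| * d ->
  #|[set I : {set 'I_n} | (#|I| == d) && (Q :&: I == finset.set0)]| * T <= 'C(n, d).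
Proof.
move=> n_gt0 ledn leT; rewrite card_ksets_disjoint.
rewrite -(leq_pmul2r (_ : 0 < n ^ #|Q|.+1)) ?expn_gt0 ?n_gt0 //.
apply: (@leq_trans ('C(n - #|Q|, d) * n ^ #|Q| * (n + #|Q| * d))).
  have : n * T <= n + #|Q| * d by lia.
  move/(leq_mul (leqnn ('C(n - #|Q|, d) * n ^ #|Q|))); rewrite expnS; lia.
apply: leq_trans (leq_mul (binomial_shrink_le d (cards_ord_le Q)) (leqnn _)) _.
by rewrite -mulnA leq_mul2l expn_sub_bernoulli ?orbT.
Qed.

Lemma ksets_meeting_le Q d T : 0 < n -> d <= n -> #|Q| * d * T <= n ->
  #|[set I : {set 'I_n} | (#|I| == d) && (Q :&: I != finset.set0)]| * T <= 'C(n, d).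
Proof.
move=> n_gt0 ledn leT.
set M := [set I : {set 'I_n} | _].
have cover : #|M| <= \sum_(x in Q) #|[set I : {set 'I_n} | (#|I| == d) && ([set x] \subset I)]|.
  apply: leq_trans (card_bigcup_le _ _); apply: subset_leq_card.
  apply/fintype.subsetP => I; rewrite inE => /andP[dI /set0Pn[x]].
  rewrite inE => /andP[xQ xI]; apply/bigcupP; exists x => //.
  by rewrite inE dI finset.sub1set.
have point x : #|[set I : {set 'I_n} | (#|I| == d) && ([set x] \subset I)]| * n <= 'C(n, d) * d.
  by have := ksets_superset_le [set x] ledn; rewrite cards1 !expn1.
have sum_le : #|M| * n <= #|Q| * ('C(n, d) * d).
  apply: leq_trans (leq_mul cover (leqnn n)) _.
  rewrite big_distrl -sum1_card big_distrl /=.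
  by apply: leq_sum => x _; rewrite mul1n point.
rewrite -(leq_pmul2r n_gt0) mulnAC.
apply: leq_trans (leq_mul sum_le (leqnn T)) _.
have : 'C(n, d) * (#|Q| * d * T) <= 'C(n, d) * n by rewrite leq_mul2l leT orbT.
nia.
Qed.

End RandomSets.

(* A random d-set meets a small test, and misses a large one, with probability
   at most 1/T. *)
Definition small_test n d T (Q : {set 'I_n}) := #|Q| * d * T <= n.
Definition large_test n d T (Q : {set 'I_n}) := n * T <= #|Q| * d.
Definition useful_test n d T (Q : {set 'I_n}) := ~~ small_test d T Q && ~~ large_test d T Q.

Lemma atypical_answers_le n d T (Q : {set 'I_n}) : 0 < n -> d <= n -> ~~ useful_test d T Q ->
  #|[set I : {set 'I_n} | (#|I| == d) && (test_answer I Q != ~~ small_test d T Q)]| * T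
  <= 'C(n, d).
Proof.
move=> n_gt0 ledn; rewrite /useful_test negb_and !negbK.
have [small _ | _ /= large] := boolP (small_test d T Q).
- apply: leq_trans (ksets_meeting_le n_gt0 ledn small); rewrite leq_mul2r; apply/orP; right.
  apply/subset_leq_card/fintype.subsetP => I; rewrite !inE /test_answer.
  by case: (Q :&: I == _).
- apply: leq_trans (ksets_disjoint_le n_gt0 ledn large); rewrite leq_mul2r; apply/orP; right.
  apply/subset_leq_card/fintype.subsetP => I; rewrite !inE /test_answer.
  by case: (Q :&: I == _).
Qed.

Lemma useful_test_unique_scale n T (Q : {set 'I_n}) d1 d2 :
  d1 * (T * T) <= d2 -> useful_test d1 T Q -> ~~ useful_test d2 T Q.
Proof.
rewrite /useful_test /small_test /large_test -!ltnNge => sep /andP[big1 _].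
rewrite negb_and -!leqNgt; apply/orP; right.
have T_gt0 : 0 < T by case: T big1 sep => [|//]; rewrite muln0.
have : #|Q| * d1 * (T * T) <= #|Q| * d2 by rewrite -mulnA leq_mul2l sep orbT.
have : n * T < #|Q| * d1 * T * T by rewrite ltn_pmul2r.
nia.
Qed.

Definition detected n m l (tests : 'I_m -> {set 'I_n})
    (dec : {ffun 'I_m -> bool} -> {set 'I_n}) (I : {set 'I_n}) :=
  (dec (answers tests I) \subset I) && (#|dec (answers tests I)| == l).

Section Deterministic.
Variables (n m l : nat) (tests : 'I_m -> {set 'I_n}) (dec : {ffun 'I_m -> bool} -> {set 'I_n}).

Definition successes d := [set I : {set 'I_n} | (#|I| == d) && detected l tests dec I].

Definition useful_tests d T := [set j | useful_test d T (tests j)].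

Definition typical_run d T (I : {set 'I_n}) :=
  [forall j, (j \notin useful_tests d T) ==> (answers tests I j == ~~ small_test d T (tests j))].

Lemma atypical_runs_le d T : 0 < n -> d <= n ->
  #|[set I : {set 'I_n} | (#|I| == d) && ~~ typical_run d T I]| * T <= m * 'C(n, d).
Proof.
move=> n_gt0 ledn.
have cover : #|[set I : {set 'I_n} | (#|I| == d) && ~~ typical_run d T I]| <=
    \sum_(j in ~: useful_tests d T) #|[set I : {set 'I_n} |
      (#|I| == d) && (test_answer I (tests j) != ~~ small_test d T (tests j))]|.
  apply: leq_trans (card_bigcup_le _ _); apply/subset_leq_card/fintype.subsetP => I.
  rewrite inE => /andP[dI /forallPn[j]]; rewrite negb_imply => /andP[jU atyp].
  apply/bigcupP; exists j; first by rewrite finset.in_setC.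
  by move: atyp; rewrite inE dI /answers ffunE.
apply: leq_trans (leq_mul cover (leqnn T)) _; rewrite big_distrl /=.
apply: (@leq_trans (\sum_(j in ~: useful_tests d T) 'C(n, d))).
  apply: leq_sum => j; rewrite finset.in_setC inE => jU.
  exact: atypical_answers_le.
by rewrite sum_nat_const leq_mul2r -[m in _ <= m]card_ord max_card orbT.
Qed.

Lemma typical_successes_le d T : d <= n ->
  #|successes d :&: [set I : {set 'I_n} | typical_run d T I]| * n ^ l
  <= 2 ^ #|useful_tests d T| * 'C(n, d) * d ^ l.
Proof.
move=> ledn.
set V := [set v : {ffun 'I_m -> bool} | [forall j, (j \notin useful_tests d T) ==>
                                               (v j == ~~ small_test d T (tests j))]].
have cover : #|successes d :&: [set I : {set 'I_n} | typical_run d T I]| <=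
    \sum_(v in V | #|dec v| == l) #|[set I : {set 'I_n} | (#|I| == d) && (dec v \subset I)]|.
  apply: leq_trans (card_bigcup_le _ _); apply/subset_leq_card/fintype.subsetP => I.
  rewrite !inE => /andP[/andP[dI /andP[decI decl]] typ].
  apply/bigcupP; exists (answers tests I); rewrite !inE.
  - by rewrite decl andbT; exact: typ.
  - by rewrite dI decI.
apply: leq_trans (leq_mul cover (leqnn _)) _; rewrite big_distrl /=.
apply: (@leq_trans (\sum_(v in V | #|dec v| == l) 'C(n, d) * d ^ l)).
  by apply: leq_sum => v /andP[_ /eqP <-]; exact: ksets_superset_le.
apply: (@leq_trans (\sum_(v in V) 'C(n, d) * d ^ l)).
  by rewrite [X in _ <= X](bigID (fun v => #|dec v| == l)) /= leq_addr.
rewrite sum_nat_const mulnA; do 2 apply: leq_mul => //.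
exact: card_ffun_agree_outside.
Qed.

Lemma successes_le d T : 0 < n -> d <= n ->
  #|successes d| * T * n ^ l
  <= m * 'C(n, d) * n ^ l + T * (2 ^ #|useful_tests d T| * 'C(n, d) * d ^ l).
Proof.
move=> n_gt0 ledn.
set typical := [set I : {set 'I_n} | typical_run d T I].
have atyp : #|successes d :\: typical| * T <= m * 'C(n, d).
  apply: leq_trans (atypical_runs_le T n_gt0 ledn); rewrite leq_mul2r; apply/orP; right.
  apply/subset_leq_card/fintype.subsetP => I; rewrite !inE.
  by case: (#|I| == d); case: (typical_run d T I); rewrite ?andbF.
rewrite -(cardsID typical (successes d)) mulnDl mulnDl addnC.
apply: leq_add; first by rewrite leq_mul2r atyp orbT.
by rewrite mulnAC mulnC leq_mul2l typical_successes_le ?orbT.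
Qed.

End Deterministic.

Local Open Scope ring_scope.

Lemma exists_ge_mean (Omega : finType) (p g : Omega -> R) :
  is_distr p -> exists w, \sum_w' p w' * g w' <= g w.
Proof.
move=> [p_ge0 p_sum1].
have [w0 _ | none] := pickP (@predT Omega); last first.
  by move: p_sum1; rewrite big_pred0 // => /esym/eqP; rewrite oner_eq0.
exists [arg max_(w > w0) g w]%O; case: arg_maxP => // w _ gmax.
apply: (@le_trans _ _ (\sum_w' p w' * g w)).
  by apply: ler_sum => w' _; apply: ler_wpM2l; [exact: p_ge0 | exact: gmax].
by rewrite -mulr_suml p_sum1 mul1r.
Qed.

Lemma many_large_terms K (f : 'I_K -> R) :
  (forall i, f i <= 1) -> K%:R * (3 / 4) <= \sum_i f i ->
  (K <= 2 * #|[set i | (1 / 2 <= f i)%R]|)%N.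
Proof.
move=> f_le1; set G := [set i | _] => mean.
have f_le i : f i <= (1 + (i \in G)%:R) / 2.
  rewrite inE; case: (boolP (1 / 2 <= f i)) => /= [_ | ]; first by have := f_le1 i; lra.
  by rewrite -ltNge addr0 mul1r => /ltW.
have : \sum_i f i <= (K%:R + #|G|%:R) / 2.
  apply: le_trans (ler_sum _ (fun i _ => f_le i)) _.
  rewrite -mulr_suml big_split /= sumr_const card_ord -sum1_card natr_sum.
  suff -> : \sum_(i in G) (1 : R) = \sum_i (i \in G)%:R by [].
  by rewrite big_mkcond; apply: eq_bigr => i _; case: (i \in G).
rewrite -(ler_nat R) natrM; lra.
Qed.

Definition success_rate n m l (tests : 'I_m -> {set 'I_n})
    (dec : {ffun 'I_m -> bool} -> {set 'I_n}) d : R :=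
  #|successes l tests dec d|%:R / 'C(n, d)%:R.

Lemma mean_success_rate n m l (Omega : finType) (p : Omega -> R)
    (tests : Omega -> 'I_m -> {set 'I_n}) (dec : Omega -> {ffun 'I_m -> bool} -> {set 'I_n}) d :
  detects_whp l p tests dec -> (l <= d <= n)%N ->
  3 / 4 <= \sum_w p w * success_rate l (tests w) (dec w) d.
Proof.
move=> [_ detect] /andP[ld dn].
have C_gt0 : 0 < 'C(n, d)%:R :> R by rewrite ltr0n bin_gt0.
have card_succ w : #|successes l (tests w) (dec w) d|%:R =
    \sum_(I : {set 'I_n} | #|I| == d) (detected l (tests w) (dec w) I)%:R :> R.
  rewrite -sum1_card natr_sum big_mkcond [RHS]big_mkcond; apply: eq_bigr => I _.
  by rewrite inE; case: (#|I| == d); case: (detected _ _ _ _).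
have -> : \sum_w p w * success_rate l (tests w) (dec w) d =
    (\sum_(I : {set 'I_n} | #|I| == d) \sum_w p w * (detected l (tests w) (dec w) I)%:R) /
    'C(n, d)%:R.
  rewrite exchange_big /= mulr_suml; apply: eq_bigr => w _.
  by rewrite /success_rate card_succ mulrA mulr_sumr.
rewrite ler_pdivlMr //.
have -> : 'C(n, d)%:R = \sum_(I : {set 'I_n} | #|I| == d) (1 : R).
  rewrite -[X in 'C(X, d)](card_ord n) -card_draws -sum1_card natr_sum.
  by apply: eq_bigl => I; rewrite inE.
rewrite mulr_sumr; apply: ler_sum => I /eqP dI; rewrite mulr1.
apply: le_trans (detect I _) _; first by rewrite dI.
rewrite (eq_bigl (fun w => detected l (tests w) (dec w) I)) // big_mkcond.
by apply: ler_sum => w _; case: (detected _ _ _ _); rewrite ?mulr1 ?mulr0.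
Qed.

Lemma success_rate_le1 n m l (tests : 'I_m -> {set 'I_n}) dec d :
  success_rate l tests dec d <= 1.
Proof.
rewrite /success_rate; have [-> | C_gt0] := posnP 'C(n, d).
  by rewrite mulr0n invr0 mulr0.
rewrite ler_pdivrMr ?ltr0n // mul1r ler_nat -[X in 'C(X, d)](card_ord n) -card_draws.
by apply/subset_leq_card/fintype.subsetP => I; rewrite !inE => /andP[].
Qed.

Lemma useful_tests_at_good_scale n m l (tests : 'I_m -> {set 'I_n}) dec d Dm T u :
  (0 < n)%N -> (0 < T)%N -> (4 * m <= T)%N -> (d <= Dm)%N -> (d <= n)%N ->
  (4 * 2 ^ u * Dm ^ l < n ^ l)%N -> 1 / 2 <= success_rate l tests dec d ->
  (u < #|useful_tests tests d T|)%N.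
Proof.
move=> n_gt0 T_gt0 le_mT le_dDm le_dn top good; rewrite ltnNge; apply/negP => few.
have C_gt0 : (0 < 'C(n, d))%N by rewrite bin_gt0.
have half : ('C(n, d) <= 2 * #|successes l tests dec d|)%N.
  move: good; rewrite /success_rate ler_pdivlMr ?ltr0n // -(ler_nat R) natrM; lra.
(* The success rate is at most m/T + 2^u (Dm/n)^l < 1/4 + 1/4. *)
have bound := successes_le l tests dec T n_gt0 le_dn.
set S := #|successes _ _ _ _| in half bound; set C := 'C(n, d) in C_gt0 half bound *.
have a1 : (C * (T * n ^ l) <= 2 * S * (T * n ^ l))%N by rewrite leq_mul2r half orbT.
have a2 : (4 * m * (C * n ^ l) <= T * (C * n ^ l))%N by rewrite leq_mul2r le_mT orbT.
have a3 : (T * C * (2 ^ #|useful_tests tests d T| * d ^ l) <= T * C * (2 ^ u * Dm ^ l))%N.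
  by rewrite leq_mul2l leq_mul ?leq_pexp2l ?leq_expn2r ?orbT.
have a4 : (4 * (2 ^ u * Dm ^ l) * (T * C) < n ^ l * (T * C))%N.
  by rewrite ltn_pmul2r ?muln_gt0 ?T_gt0 // mulnA.
lia.
Qed.

Definition separated_scales K (ds : 'I_K -> nat) T :=
  forall i k : 'I_K, (i < k)%N -> (ds i * (T * T) <= ds k)%N.

Lemma sum_useful_tests_le n m (tests : 'I_m -> {set 'I_n}) K (ds : 'I_K -> nat) T :
  separated_scales ds T -> (\sum_i #|useful_tests tests (ds i) T| <= m)%N.
Proof.
move=> sep.
have -> : (\sum_i #|useful_tests tests (ds i) T| =
           \sum_j #|[set i | useful_test (ds i) T (tests j)]|)%N.
  under eq_bigr do rewrite -sum1_card big_mkcond.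
  rewrite exchange_big; apply: eq_bigr => j _; rewrite -sum1_card [RHS]big_mkcond.
  by apply: eq_bigr => i _; rewrite !inE.
rewrite -[m in (_ <= m)%N]card_ord -sum1_card; apply: leq_sum => j _.
apply/card_le1_eqP => i k; rewrite !inE => ui uk.
have [ik | ki | /val_inj //] := ltngtP i k.
- by move: uk; rewrite (negbTE (useful_test_unique_scale (sep _ _ ik) ui)).
- by move: ui; rewrite (negbTE (useful_test_unique_scale (sep _ _ ki) uk)).
Qed.

Lemma good_scales_tests_le n m l (tests : 'I_m -> {set 'I_n})
    (dec : {ffun 'I_m -> bool} -> {set 'I_n}) K (ds : 'I_K -> nat) Dm T u :
  (0 < n)%N -> (0 < T)%N -> (4 * m <= T)%N -> (forall i, ds i <= Dm)%N -> (Dm <= n)%N ->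
  separated_scales ds T -> (4 * 2 ^ u * Dm ^ l < n ^ l)%N ->
  (#|[set i | (1 / 2 <= success_rate l tests dec (ds i))%R]| * u.+1 <= m)%N.
Proof.
move=> n_gt0 T_gt0 le_mT le_dsDm le_Dmn sep top; set G := [set i | _].
apply: leq_trans (sum_useful_tests_le tests sep).
rewrite -sum1_card big_distrl /= [X in (_ <= X)%N](bigID (mem G)) /=.
apply: leq_trans (leq_addr _ _); apply: leq_sum => i good; rewrite mul1n.
apply: (useful_tests_at_good_scale (dec := dec) n_gt0 T_gt0 le_mT (le_dsDm i) _ top).
  exact: leq_trans (le_dsDm i) le_Dmn.
by move: good; rewrite inE.
Qed.

Lemma scales_tests_le n m l (Omega : finType) (p : Omega -> R)
    (tests : Omega -> 'I_m -> {set 'I_n}) (dec : Omega -> {ffun 'I_m -> bool} -> {set 'I_n})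
    K (ds : 'I_K -> nat) Dm T u :
  detects_whp l p tests dec -> (0 < T)%N -> (4 * m <= T)%N ->
  (forall i, l <= ds i <= Dm)%N -> separated_scales ds T ->
  (4 * 2 ^ u * Dm ^ l < n ^ l)%N -> (K * u.+1 <= 2 * m)%N.
Proof.
move=> detect T_gt0 le_mT ds_in sep top.
have le_dsDm i : (ds i <= Dm)%N by case/andP: (ds_in i).
have Dm_lt_n : (Dm < n)%N.
  rewrite ltnNge; apply/negP => /(leq_expn2r l) le_pow.
  by have := expn_gt0 2 u; nia.
have [w mean_le] := exists_ge_mean (fun w => \sum_i success_rate l (tests w) (dec w) (ds i))
  detect.1.
have : K%:R * (3 / 4) <= \sum_i success_rate l (tests w) (dec w) (ds i).
  apply: le_trans mean_le; rewrite -[K in K%:R]card_ord -sumr_const mulr_suml.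
  under [X in _ <= X]eq_bigr do rewrite mulr_sumr; rewrite exchange_big /=.
  apply: ler_sum => i _; rewrite mul1r; apply: (mean_success_rate detect).
  by case/andP: (ds_in i) => -> /= /leq_trans; apply; apply: ltnW.
move/(many_large_terms (fun i => success_rate_le1 _ _ _ _)) => many.
have n_gt0 : (0 < n)%N by apply: leq_ltn_trans Dm_lt_n.
have := good_scales_tests_le (tests w) (dec w) n_gt0 T_gt0 le_mT le_dsDm (ltnW Dm_lt_n) sep top.
nia.
Qed.

Lemma geometric_scales_tests_le n m l (Omega : finType) (p : Omega -> R)
    (tests : Omega -> 'I_m -> {set 'I_n}) (dec : Omega -> {ffun 'I_m -> bool} -> {set 'I_n})
    T k u :
  detects_whp l p tests dec -> (0 < T)%N -> (4 * m <= T)%N ->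
  (4 * 2 ^ u * (l * T ^ (2 * k)) ^ l < n ^ l)%N -> (k.+1 * u.+1 <= 2 * m)%N.
Proof.
move=> detect T_gt0 le_mT top.
pose ds (i : 'I_k.+1) := (l * T ^ (2 * i))%N.
apply: (scales_tests_le (ds := ds) detect T_gt0 le_mT _ _ top).
  move=> i; rewrite leq_pmulr ?expn_gt0 ?T_gt0 // leq_mul2l leq_pexp2l ?orbT //.
  by rewrite leq_mul2l -ltnS ltn_ord orbT.
by move=> i j lt_ij; rewrite mulnn -mulnA -expnD leq_mul2l leq_pexp2l ?orbT //; lia.
Qed.

Lemma log2E x : log2 x = ln x / ln 2.
Proof. by rewrite /log2 RdivE. Qed.

Lemma ln2_gt0 : 0 < ln (2 : R).
Proof. by rewrite ln_gt0 // ltr1n. Qed.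

Lemma ler_log2 : {in Num.pos &, {mono log2 : x y / x <= y}}.
Proof. by move=> x y x_gt0 y_gt0; rewrite !log2E ler_pM2r ?invr_gt0 ?ln2_gt0 ?ler_ln. Qed.

Lemma ltr_log2 : {in Num.pos &, {mono log2 : x y / x < y}}.
Proof. by move=> x y x_gt0 y_gt0; rewrite !log2E ltr_pM2r ?invr_gt0 ?ln2_gt0 ?ltr_ln. Qed.

Lemma log2M x y : 0 < x -> 0 < y -> log2 (x * y) = log2 x + log2 y.
Proof. by move=> x_gt0 y_gt0; rewrite !log2E lnM ?posrE // mulrDl. Qed.

Lemma log2X x k : 0 < x -> log2 (x ^+ k) = k%:R * log2 x.
Proof. by move=> x_gt0; rewrite !log2E lnXn // mulr_natl mulrnAl. Qed.

Lemma log2_powR x c : log2 (x `^ c) = c * log2 x.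
Proof. by rewrite !log2E ln_powR mulrA. Qed.

Lemma log2_2 : log2 2 = 1.
Proof. by rewrite log2E divff // gt_eqF // ln2_gt0. Qed.

Lemma log2_exp2 k : log2 (2 ^+ k) = k%:R.
Proof. by rewrite log2X // log2_2 mulr1. Qed.

Lemma log2_ge0 x : 1 <= x -> 0 <= log2 x.
Proof. by move=> x_ge1; rewrite log2E; exact: divr_ge0 (ln_ge0 x_ge1) (ltW ln2_gt0). Qed.

Lemma log2_le0 x : x <= 1 -> log2 x <= 0.
Proof. by move=> x_le1; rewrite log2E pmulr_lle0 ?ln_le0 // invr_gt0 ln2_gt0. Qed.

Lemma ladder_top_small n l T k u : (0 < l)%N -> (0 < T)%N -> (0 < n)%N ->
  u%:R + 2 + l%:R * (log2 l%:R + (2 * k)%:R * log2 T%:R) < l%:R * log2 n%:R ->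
  (4 * 2 ^ u * (l * T ^ (2 * k)) ^ l < n ^ l)%N.
Proof.
move=> l_gt0 T_gt0 n_gt0 log_lt.
have -> : (4 * 2 ^ u = 2 ^ u.+2)%N by rewrite !expnS mulnA.
have pos x : (0 < x)%N -> (x%:R : R) \is Num.pos by rewrite posrE ltr0n.
rewrite -(ltr_nat R) -ltr_log2; last 2 first.
- by apply: pos; rewrite !(muln_gt0, expn_gt0) l_gt0 T_gt0.
- by apply: pos; rewrite expn_gt0 n_gt0.
rewrite natrM !natrX natrM natrX.
have l_pos : 0 < l%:R :> R by rewrite ltr0n.
have T_pos : 0 < T%:R :> R by rewrite ltr0n.
have n_pos : 0 < n%:R :> R by rewrite ltr0n.
rewrite log2M ?exprn_gt0 ?mulr_gt0 ?exprn_gt0 // log2_exp2 !log2X ?mulr_gt0 ?exprn_gt0 //.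
by rewrite log2M ?exprn_gt0 // log2X // -addn2 natrD.
Qed.

Lemma log2_tests_le m l (L : R) : 1 <= L -> (0 < l)%N -> m%:R < l%:R * L ^+ 2 ->
  log2 (4 * m.+1)%:R <= 3 + log2 l%:R + 2 * log2 L.
Proof.
move=> L_ge1 l_gt0 m_lt; have L_gt0 : 0 < L by lra.
have lL2_ge1 : 1 <= l%:R * L ^+ 2 by apply: mulr_ege1; [rewrite ler1n | exact: exprn_ege1].
have -> : 3 + log2 l%:R + 2 * log2 L = log2 (2 ^+ 3 * l%:R * L ^+ 2).
  by rewrite !log2M ?exprn_gt0 ?mulr_gt0 ?ltr0n // log2_2; lra.
rewrite ler_log2 ?posrE ?ltr0n ?mulr_gt0 ?exprn_gt0 ?ltr0n //.
by rewrite natrM -natr1; lra.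
Qed.

Lemma tests_lower_bound_few_tests (a : R) n l m (Omega : finType) (p : Omega -> R)
    (tests : Omega -> 'I_m -> {set 'I_n}) (dec : Omega -> {ffun 'I_m -> bool} -> {set 'I_n}) :
  detects_whp l p tests dec -> (0 < l)%N -> (0 < n)%N -> 0 < a ->
  6 <= a * log2 n%:R -> log2 l%:R <= (1 - 2 * a) * log2 n%:R -> 1 <= log2 (log2 n%:R) ->
  m%:R < l%:R * log2 n%:R ^+ 2 ->
  a ^+ 2 / 40 * (l%:R * log2 n%:R ^+ 2) <= m%:R * (log2 l%:R + log2 (log2 n%:R)).
Proof.
move=> detect l_gt0 n_gt0 a_gt0 aL_ge6 la_le mu_ge1 m_small.
set L := log2 n%:R in aL_ge6 la_le mu_ge1 m_small *; set la := log2 l%:R in la_le *.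
set mu := log2 L in mu_ge1 *.
have l_ge1 : 1 <= l%:R :> R by rewrite ler1n.
have la_ge0 : 0 <= la by apply: log2_ge0.
have L_gt0 : 0 < L by nra.
pose T := (4 * m.+1)%N.
have T_gt0 : (0 < T)%N by [].
have le_mT : (4 * m <= T)%N by rewrite /T mulnS leq_addl.
have lT_le : log2 T%:R <= 3 + la + 2 * mu by apply: log2_tests_le => //; nra.
set lT := log2 T%:R in lT_le.
have lT_ge2 : 2 <= lT.
  rewrite -(log2_exp2 2) /lT ler_log2 ?posrE ?exprn_gt0 ?ltr0n //.
  by rewrite -natrX ler_nat /T; lia.
(* k + 1 scales l T^(2i) fit below n^(1 - a); each good scale forces u + 1 useful tests. *)
pose k := Num.truncn (a * L / (2 * lT)); pose u := Num.truncn (a * l%:R * L / 2).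
have lT_gt0 : 0 < 2 * lT by lra.
have alL_ge6 : 6 <= a * l%:R * L by nra.
have k_le : k%:R * (2 * lT) <= a * L.
  by rewrite -ler_pdivlMr // truncn_le divr_ge0 //; lra.
have k_gt : a * L < k.+1%:R * (2 * lT) by rewrite -ltr_pdivrMr // truncnS_gt.
have u_le : u%:R * 2 <= a * l%:R * L.
  by rewrite -ler_pdivlMr // truncn_le divr_ge0 //; lra.
have u_gt : a * l%:R * L < u.+1%:R * 2 by rewrite -ltr_pdivrMr // truncnS_gt.
have top : (4 * 2 ^ u * (l * T ^ (2 * k)) ^ l < n ^ l)%N.
  apply: ladder_top_small => //.
  have : l%:R * (la + (2 * k)%:R * lT) <= l%:R * ((1 - a) * L).
    by apply: ler_wpM2l; rewrite ?natrM; lra.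
  rewrite -/la -/lT -/L; lra.
have := geometric_scales_tests_le detect T_gt0 le_mT top.
rewrite -(ler_nat R) !natrM => bound.
have prod : a * L * (a * l%:R * L) <= k.+1%:R * (2 * lT) * (u.+1%:R * 2).
  by apply: ler_pM; [lra | lra | exact: ltW | exact: ltW].
have : 4 * lT * (k.+1%:R * u.+1%:R) <= 4 * lT * (2 * m%:R) by apply: ler_wpM2l; lra.
have : lT * m%:R <= 5 * (la + mu) * m%:R by apply: ler_wpM2r; [exact: ler0n | lra].
move: prod; rewrite !expr2; lra.
Qed.

Lemma tests_lower_bound (a : R) n l m (Omega : finType) (p : Omega -> R)
    (tests : Omega -> 'I_m -> {set 'I_n}) (dec : Omega -> {ffun 'I_m -> bool} -> {set 'I_n}) :
  detects_whp l p tests dec -> (0 < l)%N -> 0 < a -> 6 <= a * log2 n%:R ->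
  log2 l%:R <= (1 - 2 * a) * log2 n%:R ->
  a ^+ 2 / 40 * (l%:R * log2 n%:R ^+ 2) / (log2 l%:R + log2 (log2 n%:R)) <= m%:R.
Proof.
move=> detect l_gt0 a_gt0 aL_ge6 la_le.
set L := log2 n%:R in aL_ge6 la_le *; set la := log2 l%:R in la_le *; set mu := log2 L.
have la_ge0 : 0 <= la by apply: log2_ge0; rewrite ler1n.
have L_gt0 : 0 < L by nra.
have a_le : a <= 1 / 2 by nra.
have mu_ge1 : 1 <= mu by rewrite -log2_2 /mu ler_log2 ?posrE //; nra.
have n_gt0 : (0 < n)%N.
  rewrite lt0n; apply/eqP => n0; move: L_gt0; rewrite /L n0 ltNge => /negP; apply.
  by apply: log2_le0; exact: ler01.
rewrite ler_pdivrMr; last lra.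
have [m_large | m_small] := lerP (l%:R * L ^+ 2) m%:R; last first.
  exact: tests_lower_bound_few_tests detect l_gt0 n_gt0 a_gt0 aL_ge6 la_le mu_ge1 m_small.
have m_le : m%:R <= m%:R * (la + mu) by rewrite ler_peMr //; lra.
apply: le_trans m_le; apply: le_trans m_large.
have X_ge0 : 0 <= l%:R * L ^+ 2 by apply: mulr_ge0; [exact: ler0n | exact: sqr_ge0].
by apply: ler_piMl => //; rewrite expr2; nra.
Qed.

Theorem theorem14 :
  forall c : R, c < 1 ->
  exists C : R, 0 < C /\
  exists N : nat,
  forall (n l m : nat) (Omega : finType) (p : Omega -> R)
    (tests : Omega -> 'I_m -> {set 'I_n})
    (dec : Omega -> {ffun 'I_m -> bool} -> {set 'I_n}),
    (N <= n)%N -> (1 <= l)%N -> l%:R <= (n%:R) `^ c ->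
    detects_whp l p tests dec ->
    C * (l%:R * (log2 n%:R) ^+ 2) / (log2 l%:R + log2 (log2 n%:R)) <= m%:R.
Proof.
move=> c c_lt1.
pose a := (1 - Num.max c 0) / 2.
have a_gt0 : 0 < a by rewrite divr_gt0 // subr_gt0 gt_max c_lt1 ltr01.
have c_le : c <= 1 - 2 * a by rewrite /a mulrC divfK // opprB addrC subrK le_max lexx.
exists (a ^+ 2 / 40); split; first by rewrite divr_gt0 ?exprn_gt0.
pose t := Num.truncn (6 / a); exists (2 ^ t.+1)%N.
move=> n l m Omega p tests dec N_le l_gt0 l_le detect.
have n_pos : 0 < n%:R :> R by rewrite ltr0n (leq_trans _ N_le) ?expn_gt0.
apply: (tests_lower_bound detect l_gt0 a_gt0).
  have : t.+1%:R <= log2 n%:R.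
    by rewrite -(log2_exp2 t.+1) ler_log2 ?posrE ?exprn_gt0 // -natrX ler_nat.
  have := truncnS_gt (6 / a); rewrite -/t ltr_pdivrMr // => t_gt; nra.
have L_ge0 : 0 <= log2 n%:R by apply: log2_ge0; rewrite ler1n -(ltr0n R).
apply: le_trans (_ : log2 l%:R <= c * log2 n%:R) _; last exact: ler_wpM2r.
by rewrite -log2_powR ler_log2 ?posrE ?ltr0n ?powR_gt0.
Qed.
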